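(* Let $g \geq 3$ be an odd integer. If $G$ is a graph on $n$ vertices whose girth is $g$ or $g+1$, then $$P(G,m) - P_{DP}(G,m) = O(m^{n-g}) \quad \text{as } m \to \infty.$$ Consequently, for every graph $M$, $$P(M,m) - P_{DP}(M,m) = O(m^{|V(M)|-3}) \quad \text{as } m \to \infty.$$
   Context: All graphs are finite and simple. The girth of a graph is the length of a shortest cycle (infinite if the graph is acyclic). For $m \in \mathbb{N}$, $[m]=\{1,\dots,m\}$, and $P(G,m)$ (the chromatic polynomial) is the number of proper colorings $V(G) \to [m]$. For $S,U \subseteq V(H)$, $E_H(S,U)$ is the set of edges of $H$ with one endpoint in $S$ and the other in $U$. A cover of a graph $G$ is a pair $\mathcal{H}=(L,H)$ where $H$ is a graph and $L: V(G)\to \mathcal{P}(V(H))$ satisfies: (1) $\{L(u): u\in V(G)\}$ is a partition of $V(H)$; (2) for each $u \in V(G)$, $H[L(u)]$ is complete; (3) if $E_H(L(u),L(v))\neq\emptyset$ then $u=v$ or $uv\in E(G)$; (4) if $uv \in E(G)$ then $E_H(L(u),L(v))$ is a matching (possibly empty). The cover is $m$-fold if $|L(u)|=m$ for all $u\in V(G)$. An $\mathcal{H}$-coloring of $G$ is an independent set $I$ of $H$ with $|I|=|V(G)|$ (equivalently, an independent set with $|I\cap L(u)|=1$ for every $u$). $P_{DP}(G,\mathcal{H})$ is the number of $\mathcal{H}$-colorings of $G$, and the DP color function is $P_{DP}(G,m)=\min P_{DP}(G,\mathcal{H})$, the minimum over all $m$-fold covers $\mathcal{H}$ of $G$, for $m\in\mathbb{N}$.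 *)

From mathcomp Require Import all_boot boolp.
Set Implicit Arguments. Unset Strict Implicit. Unset Printing Implicit Defensive.

(* A finite simple graph G is a vertex type V : finType with an adjacency
   relation e : rel V that is symmetric and irreflexive (hypotheses in the
   theorem). *)

Section Graphs.
Variable V : finType.
Variable e : rel V.

Definition is_cycle (c : seq V) : Prop := [/\ 3 <= size c, uniq c & cycle e c].

Definition girth_is (g : nat) : Prop :=
  (exists c, is_cycle c /\ size c = g) /\ (forall c, is_cycle c -> g <= size c).

Definition proper_coloring (m : nat) (f : {ffun V -> 'I_m}) : bool :=
  [forall u, forall v, e u v ==> (f u != f v)].

Definition chrom (m : nat) : nat := #|[set f : {ffun V -> 'I_m} | proper_coloring f]|.

Definition is_mfold_cover (m : nat) (HT : finType) (h : rel HT)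
    (L : V -> {set HT}) : Prop :=
  symmetric h /\ irreflexive h /\
   (forall x : HT, exists u, x \in L u) /\
   (forall u v, u != v -> [disjoint L u & L v]) /\
   (forall u x y, x \in L u -> y \in L u -> x != y -> h x y) /\
   (forall u v x y, x \in L u -> y \in L v -> h x y -> u = v \/ e u v) /\
   (forall u v, e u v ->
      (forall x y y', x \in L u -> y \in L v -> y' \in L v ->
                      h x y -> h x y' -> y = y') /\
      (forall x x' y, x \in L u -> x' \in L u -> y \in L v ->
                      h x y -> h x' y -> x = x')) /\
   (forall u, #|L u| = m).

Definition independent (HT : finType) (h : rel HT) (I : {set HT}) : bool :=
  [forall x in I, forall y in I, ~~ h x y].

Definition num_cover_colorings (HT : finType) (h : rel HT) : nat :=
  #|[set I : {set HT} | independent h I && (#|I| == #|V|)]|.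

Definition dp_achievable (m k : nat) : Prop :=
  exists (HT : finType) (h : rel HT) (L : V -> {set HT}),
    is_mfold_cover m h L /\ num_cover_colorings h = k.

(* The DP color function: the minimum over all m-fold covers. (An m-fold
   cover always exists, so the default branch is never used.) *)
Definition P_DP (m : nat) : nat :=
  match pselect (exists k, `[< dp_achievable m k >]) with
  | left pf => ex_minn pf
  | right _ => 0
  end.

End Graphs.

Definition absdiff (a b : nat) : nat := (a - b) + (b - a).

From mathcomp Require Import all_boot boolp.
From mathcomp Require Import all_order all_algebra zify.
Set Implicit Arguments. Unset Strict Implicit. Unset Printing Implicit Defensive.

(* Colorings of an m-fold cover (L, H) are counted as transversal maps
   f (f u in L u) with no conflict, i.e. no edge uv of G with f u ~ f v in
   H; the identity cover (L u = {u} x [m]) has P(G, m) of them.  By the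
   Bonferroni inequalities the number of conflict-free maps is bracketed by
   truncations of the inclusion-exclusion sum over sets A of edges, whose
   terms count the maps joining every edge of A.  For an edge set A that
   is a forest (peelable by leaves) and a cover in which every edge is a
   perfect matching, that count is exactly m ^ (n - |A|).  Girth >= g
   makes all sets of < g edges forests, sets of g edges forests or
   g-cycles, and sets of g + 1 edges forests after deleting one edge.
   Completing an arbitrary cover to one whose edges are perfect matchings
   only lowers its number of colorings; comparing its inclusion-exclusion
   sum with that of the identity cover (truncated at g and at g + 1, g odd)
   leaves an error of O(m ^ (n - g)).  Girth g or g + 1 gives girth >= g,
   and every graph has girth >= 3, whence the two parts of the theorem. *)

(* Every edge {u, v} of G is represented once, as the
   ordered pair (u, v) with u before v in the enumeration of V.  A set of
   edges is "peelable" when it can be emptied by repeatedly deleting an edge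
   at a vertex of degree 1, i.e. when it is a forest. *)
Section EdgeSets.
Variables (V : finType) (e : rel V).
Hypothesis esym : symmetric e.
Hypothesis eirr : irreflexive e.

Implicit Types (A : {set V * V}) (p q : V * V).

Definition rank_lt (u v : V) := (enum_rank u < enum_rank v)%N.

Definition edges : {set V * V} := [set p | e p.1 p.2 && rank_lt p.1 p.2].

Definition incident (x : V) p := (p.1 == x) || (p.2 == x).

Definition degree A x := #|[set p in A | incident x p]|.

Definition linked A x y := ((x, y) \in A) || ((y, x) \in A).

Definition covered A := [set x | 0 < degree A x].

Definition opposite x p := if p.1 == x then p.2 else p.1.

Inductive peelable : {set V * V} -> Prop :=
| peel0 : peelable set0
| peelS A p x : p \in A -> incident x p -> degree A x = 1 ->
    peelable (A :\ p) -> peelable A.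

Definition leafless A := A != set0 /\ forall x, degree A x != 1.

Lemma edges_loopless p : p \in edges -> p.1 != p.2.
Proof. by rewrite inE => /andP[hp _]; apply: contraTneq hp => ->; rewrite eirr. Qed.

Lemma edges_sub_loopless A : A \subset edges -> forall p, p \in A -> p.1 != p.2.
Proof. by move=> /subsetP sA p /sA; exact: edges_loopless. Qed.

Lemma edge_of_adj u v : e u v -> ((u, v) \in edges) || ((v, u) \in edges).
Proof.
move=> euv; rewrite !inE /= euv esym euv /= /rank_lt.
have : enum_rank u != enum_rank v.
  by apply: contraTneq euv => /enum_rank_inj ->; rewrite eirr.
by rewrite neq_ltn.
Qed.

Lemma edges_det p q x y : p \in edges -> q \in edges -> incident x p ->
  incident y p -> incident x q -> incident y q -> x != y -> p = q.
Proof.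
have asym u v : rank_lt u v -> rank_lt v u -> False.
  by rewrite /rank_lt => h1 h2; have := ltn_trans h1 h2; rewrite ltnn.
case: p => [a b]; case: q => [c d].
rewrite /incident !inE /= => /andP[_ lab] /andP[_ lcd] + + + + xy.
do 4 (case/orP => /eqP ?); subst => //; try by rewrite eqxx in xy.
all: by exfalso; first [exact: (asym _ _ lab lcd) | exact: (asym _ _ lcd lab)].
Qed.

Lemma degree_D1 A p x : p \in A -> degree A x = incident x p + degree (A :\ p) x.
Proof.
move=> pA; rewrite /degree; case: (boolP (incident x p)) => ip /=.
  rewrite (cardsD1 p) inE pA ip add1n; congr (_.+1).
  by apply: eq_card => r; rewrite !inE andbA.
apply: eq_card => r; rewrite !inE.
by case: eqP => [->|]; rewrite ?pA ?(negbTE ip) ?andbF.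
Qed.

Lemma degree1_unique A p x : p \in A -> incident x p -> degree A x = 1 ->
  forall q, q \in A -> incident x q -> q = p.
Proof.
move=> pA ip /eqP /cards1P [r Er] q qA iq.
have : p \in [set p in A | incident x p] by rewrite inE pA ip.
have : q \in [set p in A | incident x p] by rewrite inE qA iq.
by rewrite Er !inE => /eqP -> /eqP ->.
Qed.

Lemma covered_incident A p x : p \in A -> incident x p -> x \in covered A.
Proof.
by move=> pA ip; rewrite inE /degree card_gt0; apply/set0Pn; exists p; rewrite inE pA ip.
Qed.

Lemma handshake A : (forall p, p \in A -> p.1 != p.2) ->
  \sum_x degree A x = 2 * #|A|.
Proof.
move=> Hn.
have -> : \sum_x degree A x = \sum_x \sum_(p in A) (incident x p : nat).
  apply: eq_bigr => x _; rewrite /degree -sum1_card big_mkcond /=.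
  rewrite [RHS]big_mkcond /=; apply: eq_bigr => p _; rewrite inE.
  by case: (p \in A); case: (incident x p).
rewrite exchange_big /= -sum1_card big_distrr /=; apply: eq_bigr => p pA.
rewrite muln1 (bigD1 p.1) // (bigD1 p.2) /=; last by rewrite eq_sym Hn.
rewrite big1 ?addn0; first by rewrite /incident eqxx /= eqxx orbT.
move=> x /andP[x1 x2]; apply/eqP; rewrite eqb0 /incident.
by rewrite negb_or ![_ == x]eq_sym x1 x2.
Qed.

Lemma degree_sum_leafless A : leafless A ->
  \sum_x degree A x = 2 * #|covered A| + \sum_(x in covered A) (degree A x - 2).
Proof.
move=> [_ lA].
rewrite (bigID (mem (covered A))) /= [X in _ + X]big1; last first.
  by move=> x; rewrite inE -eqn0Ngt => /eqP.
rewrite addn0 mulnC -sum_nat_const -big_split /=; apply: eq_bigr => x.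
rewrite inE => dx; rewrite subnKC //; move: dx (lA x).
by case: (degree A x) => [|[|]].
Qed.

Lemma nonpeelable_leafless A : ~ peelable A ->
  exists2 A' : {set V * V}, A' \subset A & leafless A'.
Proof.
have [n] := ubnP #|A|; elim: n A => // n IH A ltA nred.
case: (boolP [exists p in A, exists x, incident x p && (degree A x == 1)]).
  case/exists_inP => p pA /existsP[x /andP[ix /eqP dx]].
  have nred' : ~ peelable (A :\ p) by move=> r; apply: nred; exact: peelS pA ix dx r.
  have ltA' : #|A :\ p| < n by move: ltA; rewrite (cardsD1 p A) pA add1n ltnS.
  have [A' sA' cA'] := IH _ ltA' nred'.
  by exists A' => //; apply: subset_trans sA' (subsetDl _ _).
move=> nleaf; exists A => //; split.
  by apply/eqP => A0; apply: nred; rewrite A0; exact: peel0.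
move=> x; apply/eqP => dx.
have : 0 < degree A x by rewrite dx.
rewrite /degree card_gt0 => /set0Pn[p]; rewrite inE => /andP[pA ix].
move/negP: nleaf; apply; apply/exists_inP; exists p => //.
by apply/existsP; exists x; rewrite ix dx eqxx.
Qed.

Lemma linked_adj A x y : A \subset edges -> linked A x y -> e x y.
Proof. by move=> /subsetP sA /orP[] /sA; rewrite inE => /andP[] //= h _; rewrite esym. Qed.

Lemma linked_sym A : symmetric (linked A).
Proof. by move=> x y; rewrite /linked orbC. Qed.

Lemma linked_degree A x y : linked A x y -> 0 < degree A x.
Proof.
rewrite /degree card_gt0 => /orP[] h; apply/set0Pn.
  by exists (x, y); rewrite inE h /incident eqxx.
by exists (y, x); rewrite inE h /incident eqxx orbT.
Qed.

Lemma linked_opposite A p x : p \in A -> incident x p ->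
  linked A x (opposite x p) /\ incident (opposite x p) p.
Proof.
case: p => a b pA; rewrite /incident /opposite /= => /orP[]/eqP E; subst.
  by rewrite eqxx /linked pA eqxx orbT.
case: eqP => [E|_]; first by subst; rewrite /linked pA eqxx.
by rewrite /linked pA orbT eqxx.
Qed.

Lemma opposite_neq x p : incident x p -> p.1 != p.2 -> opposite x p != x.
Proof.
case: p => a b; rewrite /incident /opposite /=.
by case: (eqVneq a x) => [->|ax] /=; [rewrite eq_sym | move=> /eqP ->].
Qed.

Lemma opposite_cases x p : incident x p ->
  (opposite x p, x) = (p.2, p.1) \/ (opposite x p, x) = (p.1, p.2).
Proof.
rewrite /incident /opposite; case: eqP => [->|ne] /=; first by left.
by move=> /eqP ->; right.
Qed.

Lemma second_neighbour A x y : A \subset edges -> 1 < degree A x -> linked A x y ->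
  exists2 z, z != y & linked A x z.
Proof.
move=> sA /card_gt1P[q1 [q2 [q1i q2i nq]]] _.
move: q1i q2i; rewrite !inE => /andP[q1A i1] /andP[q2A i2].
have [a1 o1] := linked_opposite q1A i1; have [a2 o2] := linked_opposite q2A i2.
have ne : opposite x q1 != opposite x q2.
  apply: contra nq => /eqP E; apply/eqP.
  apply: (edges_det (x := x) (y := opposite x q1)) => //; rewrite ?(subsetP sA) ?E //.
  by apply: contraTneq (linked_adj sA a2) => <-; rewrite eirr.
case: (eqVneq (opposite x q1) y) => [E|]; last by exists (opposite x q1).
by exists (opposite x q2) => //; rewrite -E eq_sym.
Qed.

Lemma close_cycle A z t w : A \subset edges -> uniq (z :: t) ->
  path (linked A) z t -> w \in t -> w != head z t -> linked A z w ->
  exists c, is_cycle e c /\ cycle (linked A) c.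
Proof.
move=> sA ut pt wt wh azw.
set i := index w t.
have it : i < size t by rewrite index_mem.
have i0 : 0 < i.
  rewrite lt0n; apply: contra wh => /eqP i0.
  by rewrite -(nth_index z wt) -/i i0; case: (t) => [|? ?].
have ct : cycle (linked A) (z :: take i.+1 t).
  rewrite /= rcons_path take_path //= (last_nth z) size_takel //=.
  by rewrite nth_take // nth_index // linked_sym.
exists (z :: take i.+1 t); split => //; split.
- by rewrite /= size_takel.
- exact: take_uniq i.+2 ut.
- by apply: sub_path ct => a b; exact: linked_adj.
Qed.

(* Growing a simple path backwards inside a leafless set must eventually
   close a cycle, since V is finite. *)
Lemma leafless_path_cycle A k : A \subset edges -> leafless A -> forall s, uniq s ->
  sorted (linked A) s -> 1 < size s -> #|V| - size s <= k ->
  exists c, is_cycle e c /\ cycle (linked A) c.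
Proof.
move=> sA [_ cA]; elim: k => [|k IH] [|z [|y0 t']] //= us ss _ gap.
all: have azy : linked A z y0 by case/andP: ss.
all: have dz : 1 < degree A z
  by have := linked_degree azy; have := cA z; case: (degree A z) => [|[|]].
all: have [w wy azw] := second_neighbour sA dz azy.
all: have wz : w != z by apply: contraTneq (linked_adj sA azw) => ->; rewrite eirr.
all: case: (boolP (w \in y0 :: t')) => wt;
  first by apply: (close_cycle (t := y0 :: t') sA us ss wt wy azw).
all: have uw : uniq (w :: z :: y0 :: t') by rewrite /= inE negb_or wz wt us.
all: have := max_card (mem (w :: z :: y0 :: t')); rewrite (card_uniqP uw) /=.
- by move: gap => /=; lia.
- move=> _; apply: (IH (w :: z :: y0 :: t')) => //=; first by rewrite linked_sym azw.
  by move: gap => /=; lia.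
Qed.

Lemma leafless_cycle A : A \subset edges -> leafless A ->
  exists c, is_cycle e c /\ cycle (linked A) c.
Proof.
move=> sA cA; have [/set0Pn[q qA] _] := cA.
have qn := edges_sub_loopless sA qA.
apply: (leafless_path_cycle (k := #|V|) sA cA (s := [:: q.1; q.2])) => //=.
- by rewrite inE qn.
- by rewrite andbT /linked -surjective_pairing qA.
- exact: leq_subr.
Qed.

Section Girth.
Variable g : nat.
Hypothesis girth_ge : forall c, is_cycle e c -> g <= size c.

(* A leafless set spans at least g vertices (it contains a cycle) and has
   at least as many edges as vertices (all its degrees are >= 2). *)
Lemma leafless_size A : A \subset edges -> leafless A ->
  g <= #|covered A| /\ #|covered A| <= #|A|.
Proof.
move=> sA cA; split; last first.
  have := handshake (edges_sub_loopless sA); rewrite degree_sum_leafless // => E.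
  by rewrite -(leq_pmul2l (isT : 0 < 2)) -E leq_addr.
have [c [cc ca]] := leafless_cycle sA cA.
apply: (leq_trans (girth_ge cc)); case: cc => _ uc _.
rewrite -(card_uniqP uc); apply: subset_leq_card; apply/subsetP => x xc.
by rewrite inE; apply: linked_degree (next_cycle ca xc).
Qed.

Lemma peelable_small A : A \subset edges -> #|A| < g -> peelable A.
Proof.
move=> sA ltA; apply: contrapT => nr.
have [A' sA' cA'] := nonpeelable_leafless nr.
have [h1 h2] := leafless_size (subset_trans sA' sA) cA'.
have := subset_leq_card sA'; lia.
Qed.

Lemma nonpeelable_girth A : A \subset edges -> #|A| = g -> ~ peelable A ->
  [/\ leafless A, forall x, degree A x = 0 \/ degree A x = 2 & #|covered A| <= g].
Proof.
move=> sA cardA nr.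
have [A' sA' cA'] := nonpeelable_leafless nr.
have [h1 h2] := leafless_size (subset_trans sA' sA) cA'.
have EA : A' = A by apply/eqP; rewrite eqEcard sA' /= cardA; exact: leq_trans h1 h2.
subst A'.
have := handshake (edges_sub_loopless sA); rewrite degree_sum_leafless // => E.
have S0 : \sum_(x in covered A) (degree A x - 2) = 0.
  apply/eqP; rewrite -(eqn_add2l (2 * #|covered A|)) addn0 eqn_leq leq_addr andbT.
  by rewrite E cardA leq_mul2l h1.
split => //; last by lia.
move=> x; case: (boolP (x \in covered A)) => xT; last first.
  by left; move: xT; rewrite inE -eqn0Ngt => /eqP.
right; move/eqP: S0; rewrite sum_nat_eq0 => /forall_inP/(_ x xT).
case: cA' => _ /(_ x); move: xT; rewrite inE.
by case: (degree A x) => [|[|[|]]].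
Qed.

(* A set of g + 1 edges becomes peelable after deleting some edge: if no
   deletion worked, any two edges p, q would leave two g-cycles A \ p and
   A \ q, forcing every end of p to be an end of q, i.e. p = q. *)
Lemma peelable_remove_one A : 0 < g -> A \subset edges -> #|A| = g.+1 ->
  exists2 p, p \in A & peelable (A :\ p).
Proof.
move=> g0 sA cardA; apply: contrapT => nex.
have nr p : p \in A -> ~ peelable (A :\ p) by move=> pA r; apply: nex; exists p.
have cD p : p \in A -> #|A :\ p| = g.
  by move=> pA; move: cardA; rewrite (cardsD1 p) pA add1n; case.
have sD p : A :\ p \subset edges by apply: subset_trans sA; exact: subsetDl.
have : 1 < #|A| by rewrite cardA ltnS.
case/card_gt1P => p [q [pA qA pq]].
have [_ dp _] := nonpeelable_girth (sD p) (cD _ pA) (nr _ pA).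
have [_ dq _] := nonpeelable_girth (sD q) (cD _ qA) (nr _ qA).
have ends x : incident x p -> incident x q.
  move=> ip.
  have pAq : p \in A :\ q by rewrite !inE pA andbT; apply: contra pq => /eqP ->.
  have h3 : 0 < degree (A :\ q) x.
    by apply: (@linked_degree _ _ (opposite x p)); have [] := linked_opposite pAq ip.
  move: (degree_D1 x pA) (degree_D1 x qA) (dp x) (dq x) h3; rewrite ip.
  by case: (incident x q) => //=; lia.
move/negP: pq; apply; apply/eqP; apply: (edges_det (x := p.1) (y := p.2)).
all: rewrite ?(subsetP sA) ?ends ?(edges_sub_loopless sA) //.
all: by rewrite /incident eqxx ?orbT.
Qed.

End Girth.

End EdgeSets.

(* When R joins
   the lists along the edges of A injectively (resp. bijectively), each
   leaf edge of a peelable A divides the count by at least (resp. exactly)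
   m, so a peelable A is joined by at most (resp. exactly) m ^ (|V| - |A|)
   transversal maps. *)
Section Transversals.
Variables (V HT : finType) (L : V -> {set HT}) (m : nat).
Hypothesis card_L : forall u, #|L u| = m.
Hypothesis m_gt0 : 0 < m.
Implicit Types (A B : {set V * V}) (p q : V * V) (R : rel HT).

Definition transversals : {set {ffun V -> HT}} :=
  locked [set f : {ffun V -> HT} | [forall u, f u \in L u]].

Definition joined_maps R A : {set {ffun V -> HT}} :=
  locked [set f in transversals | [forall p in A, R (f p.1) (f p.2)]].

Definition count_joined R A := #|joined_maps R A|.

Definition reassign (f : {ffun V -> HT}) x y := [ffun z => if z == x then y else f z].

Definition joins_at_most_once R u v := forall z y y', z \in L u -> y \in L v ->
  y' \in L v -> R z y -> R z y' -> y = y'.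

Definition joins_each R u v := forall z, z \in L u -> exists2 y, y \in L v & R z y.

Definition matching_edge R p :=
  [/\ p.1 != p.2, joins_at_most_once R p.1 p.2 & joins_at_most_once R p.2 p.1].
Definition perfect_edge R p := joins_each R p.1 p.2 /\ joins_each R p.2 p.1.

Lemma in_transversals f : (f \in transversals) = [forall u, f u \in L u].
Proof. by rewrite /transversals -lock inE. Qed.

Lemma in_joined_maps R A f :
  (f \in joined_maps R A) = (f \in transversals) && [forall p in A, R (f p.1) (f p.2)].
Proof. by rewrite /joined_maps -lock inE. Qed.

Lemma joined_transversal R A f : f \in joined_maps R A -> f \in transversals.
Proof. by rewrite in_joined_maps => /andP[]. Qed.

Lemma joined_sub R A B f : B \subset A -> f \in joined_maps R A -> f \in joined_maps R B.
Proof.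
move=> /subsetP sBA; rewrite !in_joined_maps => /andP[-> /forall_inP h] /=.
by apply/forall_inP => q /sBA; exact: h.
Qed.

Lemma count_joined_sub R A B : B \subset A -> count_joined R A <= count_joined R B.
Proof. by move=> sBA; apply/subset_leq_card/subsetP => f; exact: joined_sub. Qed.

Lemma card_transversals : #|transversals| = m ^ #|V|.
Proof.
have -> : #|transversals| =
    #|(family (fun u => mem (L u)) : simpl_pred {dffun forall x : V, HT})|.
  by apply: eq_card => f; rewrite in_transversals; apply/forallP/familyP.
rewrite card_family cardE /image_mem; elim: (enum V) => //= a s ->.
by rewrite card_L expnS.
Qed.

Lemma count_joined0 R : count_joined R set0 = m ^ #|V|.
Proof.
rewrite /count_joined -card_transversals; apply: eq_card => f; rewrite in_joined_maps.
by case: (f \in transversals) => //=; apply/forall_inP => q; rewrite inE.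
Qed.

Lemma list_nonempty (x : V) : exists x0, x0 \in L x.
Proof. by apply/set0Pn; rewrite -card_gt0 card_L. Qed.

Lemma reassign_transversal f x y : f \in transversals -> y \in L x ->
  reassign f x y \in transversals.
Proof.
rewrite !in_transversals => /forallP hf yx; apply/forallP => z; rewrite ffunE.
by case: eqP => [->|_] //; exact: hf.
Qed.

Lemma reassign_joined R A f x y : (forall q, q \in A -> ~~ incident x q) ->
  f \in transversals -> y \in L x ->
  (reassign f x y \in joined_maps R A) = (f \in joined_maps R A).
Proof.
move=> nA fC yx; rewrite !in_joined_maps reassign_transversal // fC /=.
apply: eq_forallb_in => q qA; rewrite !ffunE.
have := nA q qA; rewrite /incident negb_or => /andP[n1 n2].
by rewrite (negbTE n1) (negbTE n2).
Qed.

Lemma fiber_le R A x y y' : (forall q, q \in A -> ~~ incident x q) ->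
  y \in L x -> y' \in L x ->
  #|[set f in joined_maps R A | f x == y]| <= #|[set f in joined_maps R A | f x == y']|.
Proof.
move=> nA yx y'x.
rewrite -(@card_in_imset _ _ (fun f => reassign f x y')); last first.
  move=> f g; rewrite !inE => /andP[_ /eqP fx] /andP[_ /eqP gx] E.
  apply/ffunP => z; have := congr1 (fun h : {ffun V -> HT} => h z) E; rewrite !ffunE.
  by case: eqP => [->|//]; rewrite fx gx.
apply/subset_leq_card/subsetP => _ /imsetP[f + ->]; rewrite !inE => /andP[fN _].
by rewrite reassign_joined // ?fN ?ffunE ?eqxx //; exact: joined_transversal fN.
Qed.

Lemma count_joined_fiber R A x x0 : (forall q, q \in A -> ~~ incident x q) ->
  x0 \in L x -> count_joined R A = m * #|[set f in joined_maps R A | f x == x0]|.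
Proof.
move=> nA x0x.
rewrite /count_joined -sum1_card.
rewrite (partition_big (fun f : {ffun V -> HT} => f x) (mem (L x))) /=; last first.
  by move=> f /joined_transversal; rewrite in_transversals => /forallP.
rewrite -(card_L x) -sum_nat_const; apply: eq_bigr => y yx.
rewrite sum1dep_card; apply/eqP; rewrite eqn_leq.
by rewrite (fiber_le R nA yx x0x) (fiber_le R nA x0x yx).
Qed.

Section LeafEdge.
Variables (R : rel HT) (A : {set V * V}) (p : V * V) (x : V).
Hypothesis R_sym : symmetric R.
Hypothesis pA : p \in A.
Hypothesis x_p : incident x p.
Hypothesis deg_x : degree A x = 1.
Hypothesis p_loopless : p.1 != p.2.

Let y := opposite x p.

Lemma joined_leaf_edge (f : V -> HT) : R (f p.1) (f p.2) = R (f y) (f x).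
Proof.
move: x_p; rewrite /y /incident /opposite; case: eqP => [->|ne] /=; first by rewrite R_sym.
by move=> /eqP ->.
Qed.

Lemma leaf_rest_free q : q \in A :\ p -> ~~ incident x q.
Proof.
rewrite !inE => /andP[qp qA]; apply: contra qp => iq; apply/eqP.
exact: (degree1_unique pA x_p deg_x qA iq).
Qed.

Lemma count_joined_leaf_le : joins_at_most_once R y x ->
  count_joined R A * m <= count_joined R (A :\ p).
Proof.
move=> once; have [x0 x0x] := list_nonempty x.
rewrite (count_joined_fiber R leaf_rest_free x0x) mulnC leq_pmul2l // /count_joined.
rewrite -(@card_in_imset _ _ (fun f => reassign f x x0) (joined_maps R A)); last first.
  move=> f g fN gN E.
  have fg z : z != x -> f z = g z.
    by move=> zx; have := congr1 (fun h : {ffun V -> HT} => h z) E; rewrite !ffunE (negbTE zx).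
  apply/ffunP => z; case: (eqVneq z x) => [->|]; last exact: fg.
  move: fN gN; rewrite !in_joined_maps !in_transversals.
  move=> /andP[/forallP fC /forall_inP fR] /andP[/forallP gC /forall_inP gR].
  apply: (once (f y)) => //.
  - by rewrite -joined_leaf_edge; exact: fR.
  - by rewrite (fg _ (opposite_neq x_p p_loopless)) -joined_leaf_edge; exact: gR.
apply/subset_leq_card/subsetP => _ /imsetP[f fN ->]; rewrite inE.
rewrite reassign_joined ?ffunE ?eqxx ?andbT //.
- exact: joined_sub (subsetDl _ _) fN.
- exact: leaf_rest_free.
- exact: joined_transversal fN.
Qed.

Lemma count_joined_leaf_ge : joins_each R y x ->
  count_joined R (A :\ p) <= count_joined R A * m.
Proof.
move=> each; have [x0 x0x] := list_nonempty x.
rewrite (count_joined_fiber R leaf_rest_free x0x) [X in _ <= X]mulnC leq_pmul2l //.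
rewrite /count_joined.
have yx := opposite_neq x_p p_loopless.
apply: leq_trans (leq_imset_card (fun f => reassign f x x0) (joined_maps R A)).
apply/subset_leq_card/subsetP => g; rewrite inE => /andP[gN /eqP gx].
have gC := joined_transversal gN.
have [z zx Rz] : exists2 z, z \in L x & R (g y) z.
  by apply: each; move: gC; rewrite in_transversals => /forallP.
apply/imsetP; exists (reassign g x z); last first.
  by apply/ffunP => w; rewrite !ffunE; case: eqP => [->|].
move: (gN); rewrite !in_joined_maps reassign_transversal //= => /andP[_ /forall_inP gR].
apply/forall_inP => q qA; case: (eqVneq q p) => [->|qp].
  by rewrite joined_leaf_edge !ffunE eqxx (negbTE yx).
have qAp : q \in A :\ p by rewrite !inE qp qA.
have := leaf_rest_free qAp; rewrite /incident negb_or => /andP[n1 n2].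
by rewrite !ffunE (negbTE n1) (negbTE n2); exact: gR.
Qed.

End LeafEdge.

Lemma opposite_matching R p x : incident x p -> matching_edge R p ->
  joins_at_most_once R (opposite x p) x.
Proof. by move=> ip [_ ? ?]; case: (opposite_cases ip) => [[-> ->]|[-> ->]]. Qed.

Lemma opposite_perfect R p x : incident x p -> perfect_edge R p ->
  joins_each R (opposite x p) x.
Proof. by move=> ip [? ?]; case: (opposite_cases ip) => [[-> ->]|[-> ->]]. Qed.

Lemma peelable_count_le R A : symmetric R -> peelable A ->
  (forall p, p \in A -> matching_edge R p) ->
  count_joined R A * m ^ #|A| <= m ^ #|V|.
Proof.
move=> Rs; elim => [|B p x pB ip dx _ IH] hm; first by rewrite count_joined0 cards0 muln1.
have := IH (fun q qB => hm q (subsetP (subsetDl B [set p]) q qB)).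
apply: leq_trans; rewrite (cardsD1 p B) pB add1n expnS mulnA leq_mul2r.
have [pn _ _] := hm p pB.
by rewrite (count_joined_leaf_le Rs pB ip dx pn (opposite_matching ip (hm p pB))) orbT.
Qed.

Lemma peelable_count_eq R A : symmetric R -> peelable A ->
  (forall p, p \in A -> matching_edge R p /\ perfect_edge R p) ->
  count_joined R A * m ^ #|A| = m ^ #|V|.
Proof.
move=> Rs; elim => [|B p x pB ip dx _ IH] hm; first by rewrite count_joined0 cards0 muln1.
rewrite -(IH (fun q qB => hm q (subsetP (subsetDl B [set p]) q qB))).
rewrite (cardsD1 p B) pB add1n expnS mulnA; congr (_ * _).
have [[pn _ _] _] := hm p pB; have [mp pp] := hm p pB.
apply/eqP; rewrite eqn_leq (count_joined_leaf_le Rs pB ip dx pn (opposite_matching ip mp)).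
by rewrite (count_joined_leaf_ge Rs pB ip dx pn (opposite_perfect ip pp)).
Qed.

End Transversals.

Section CoverColorings.
Variables (V : finType) (e : rel V).
Hypothesis esym : symmetric e.
Hypothesis eirr : irreflexive e.

Definition conflicts (HT : finType) (R : rel HT) (f : {ffun V -> HT}) :=
  [set p in edges e | R (f p.1) (f p.2)].

Definition count_free (HT : finType) (L : V -> {set HT}) (R : rel HT) :=
  #|[set f in transversals L | conflicts R f == set0]|.

Variables (HT : finType) (h : rel HT) (L : V -> {set HT}) (m : nat).
Hypothesis cov : is_mfold_cover e m h L.

Lemma cover_sym : symmetric h. Proof. by case: cov. Qed.

Lemma cover_card u : #|L u| = m.
Proof. by case: cov => _ [_ [_ [_ [_ [_ [_ c]]]]]]. Qed.

Lemma cover_list_unique x u v : x \in L u -> x \in L v -> u = v.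
Proof.
case: cov => _ [_ [_ [disj _]]] xu xv; apply/eqP; apply: contraT => uv.
by rewrite (disjointFr (disj _ _ uv) xu) in xv.
Qed.

Lemma transversal_inj f : f \in transversals L -> injective f.
Proof.
rewrite in_transversals => /forallP fC u v E.
by apply: (@cover_list_unique (f u)); last rewrite E.
Qed.

Lemma conflict_free_indep f u v : f \in transversals L -> conflicts h f == set0 ->
  ~~ h (f u) (f v).
Proof.
case: cov => hs [hi [_ [_ [_ [adj _]]]]].
move=> fC /eqP B0; case: (eqVneq u v) => [->|uv]; first by rewrite hi.
apply/negP => huv; move: fC; rewrite in_transversals => /forallP fL.
case: (adj u v (f u) (f v) (fL u) (fL v) huv) => [E|euv]; first by rewrite E eqxx in uv.
case/orP: (edge_of_adj esym eirr euv) => pE.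
  have : (u, v) \in conflicts h f by rewrite inE pE /= huv.
  by rewrite B0 inE.
have : (v, u) \in conflicts h f by rewrite inE pE /= hs huv.
by rewrite B0 inE.
Qed.

(* An independent set of size |V| meets every list: its elements lie in
   pairwise different lists (lists are cliques), hence in all of them. *)
Lemma indep_meets_lists (I : {set HT}) : independent h I -> #|I| = #|V| ->
  forall u, exists2 x, x \in I & x \in L u.
Proof.
case: cov => _ [_ [part [_ [cliq _]]]] /forall_inP indI cI.
have [own ownP] := @fin_all_exists HT (fun _ => V) (fun x u => x \in L u) part.
have own_inj : {in I &, injective own}.
  move=> x y xI yI oxy; apply: contraTeq (forall_inP (indI x xI) y yI) => xy.
  by rewrite negbK; apply: (cliq (own x)) => //; rewrite oxy.
have onto : own @: I = [set: V].
  by apply/eqP; rewrite eqEcard subsetT cardsT /= card_in_imset // cI.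
move=> u; have : u \in own @: I by rewrite onto inE.
by case/imsetP => x xI ->; exists x.
Qed.

Lemma indep_image (I : {set HT}) : independent h I -> #|I| = #|V| ->
  exists2 f, (f \in transversals L) && (conflicts h f == set0) & I = [set f u | u : V].
Proof.
move=> indI cI.
have meet u : exists x, (x \in I) && (x \in L u).
  by have [x xI xL] := indep_meets_lists indI cI u; exists x; rewrite xI.
have [F FP] := @fin_all_exists V (fun _ => HT) _ meet.
pose f := [ffun u => F u].
have fC : f \in transversals L.
  by rewrite in_transversals; apply/forallP => u; rewrite ffunE; case/andP: (FP u).
have fI u : f u \in I by rewrite ffunE; case/andP: (FP u).
have imfI : [set f u | u : V] \subset I by apply/subsetP => _ /imsetP[u _ ->].
exists f.
  rewrite fC /=; apply/eqP/setP => p; rewrite !inE; apply/negP => /andP[_ hp].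
  by move: indI => /forall_inP/(_ _ (fI p.1))/forall_inP/(_ _ (fI p.2)); rewrite hp.
apply/eqP; rewrite eq_sym eqEcard imfI cI card_imset ?leqnn //.
exact: transversal_inj fC.
Qed.

Lemma cover_colorings_count : num_cover_colorings V h = count_free L h.
Proof.
pose img (f : {ffun V -> HT}) := [set f u | u : V].
rewrite /num_cover_colorings /count_free.
have img_inj : {in [set f in transversals L | conflicts h f == set0] &, injective img}.
  move=> f g; rewrite !inE => /andP[fC _] /andP[gC _] E; apply/ffunP => u.
  have : f u \in img g by rewrite -E; apply/imsetP; exists u.
  case/imsetP => v _ fg; rewrite fg.
  move: fC gC; rewrite !in_transversals => /forallP fL /forallP gL.
  by have := @cover_list_unique (f u) u v (fL u); rewrite fg => /(_ (gL v)) ->.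
rewrite -(card_in_imset img_inj); apply: eq_card => I.
rewrite inE; apply/andP/imsetP.
- by case=> indI /eqP cI; have [f fG ->] := indep_image indI cI; exists f; rewrite ?inE.
- case=> f; rewrite inE => /andP[fC B0] ->; split; last first.
    by rewrite card_imset //; exact: transversal_inj.
  apply/forall_inP => _ /imsetP[u _ ->]; apply/forall_inP => _ /imsetP[v _ ->].
  exact: conflict_free_indep.
Qed.

End CoverColorings.

Section Stars.
Variable V : finType.
Implicit Types (S : {set V}).

Definition star (t0 : V) (S : {set V}) : {set V * V} := [set (t0, t) | t in S].

Lemma star_card (t0 : V) S : #|star t0 S| = #|S|.
Proof. by rewrite card_imset // => a b [->]. Qed.

Lemma star_peelable (t0 : V) S : t0 \notin S -> peelable (star t0 S).
Proof.
have [n] := ubnP #|S|; elim: n S => // n IH S ltS nS.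
case: (set_0Vmem S) => [->|[t tS]]; first by rewrite /star imset0; exact: peel0.
have pS : (t0, t) \in star t0 S by apply/imsetP; exists t.
have t0t : t0 != t by apply: contraNneq nS => ->.
apply: (peelS (x := t) pS); first by rewrite /incident eqxx orbT.
  apply/eqP/cards1P; exists (t0, t); apply/setP => q; rewrite !inE.
  apply/andP/eqP => [[/imsetP[t' t'S ->]]|->]; last by rewrite pS /incident eqxx orbT.
  by rewrite /incident /= (negbTE t0t) /= => /eqP ->.
have -> : star t0 S :\ (t0, t) = star t0 (S :\ t).
  apply/setP => q; rewrite !inE; apply/andP/imsetP.
    case=> qp /imsetP[t' t'S E]; exists t' => //; rewrite !inE t'S andbT.
    by apply: contraNneq qp => E'; rewrite E E'.
  case=> t'; rewrite !inE => /andP[t't t'S] ->; split; last by apply/imsetP; exists t'.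
  by apply: contraNneq t't => -[->].
apply: IH; last by rewrite !inE negb_and nS orbT.
by move: ltS; rewrite (cardsD1 t S) tS add1n ltnS.
Qed.

End Stars.

(* Every edge is a perfect matching, and a g-cycle
   spanning at most g vertices is joined by at least m ^ (|V| - g + 1)
   transversal maps (those constant in color on the cycle). *)
Section IdentityCover.
Variables (V : finType) (e : rel V).
Hypothesis esym : symmetric e.
Hypothesis eirr : irreflexive e.
Variable m : nat.
Hypothesis m_gt0 : 0 < m.

Definition id_list (u : V) : {set V * 'I_m} := [set x | x.1 == u].

Definition id_adj : rel (V * 'I_m) :=
  fun x y => ((x.1 == y.1) && (x.2 != y.2)) || (e x.1 y.1 && (x.2 == y.2)).

Definition same_color : rel (V * 'I_m) := fun x y => x.2 == y.2.

Lemma in_id_list u x : (x \in id_list u) = (x.1 == u).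
Proof. by rewrite inE. Qed.

Lemma id_list_card u : #|id_list u| = m.
Proof.
have -> : id_list u = [set (u, i) | i : 'I_m].
  apply/setP => x; rewrite inE; apply/eqP/imsetP => [<-|[i _ ->]] //.
  by exists x.2 => //; case: x.
by rewrite card_imset ?card_ord // => a b [].
Qed.

Lemma id_adjE u v x y : x \in id_list u -> y \in id_list v -> u != v ->
  id_adj x y = e u v && (x.2 == y.2).
Proof. by rewrite !in_id_list => /eqP xu /eqP yv uv; rewrite /id_adj xu yv (negbTE uv). Qed.

Lemma id_adj_sym : symmetric id_adj.
Proof. by move=> x y; rewrite /id_adj esym (eq_sym x.1) !(eq_sym x.2). Qed.

Lemma pair_eq (x y : V * 'I_m) : x.1 = y.1 -> x.2 = y.2 -> x = y.
Proof. by case: x; case: y => /= ? ? ? ? -> ->. Qed.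

Lemma color_matching (R : rel (V * 'I_m)) u v : u != v ->
  (forall x y, x \in id_list u -> y \in id_list v -> R x y = (x.2 == y.2)) ->
  joins_at_most_once id_list R u v /\ joins_each id_list R u v.
Proof.
move=> uv RE; split.
  move=> z y y' zu yv y'v; rewrite !RE // => /eqP E1 /eqP E2; apply: pair_eq.
    by move: yv y'v; rewrite !in_id_list => /eqP -> /eqP ->.
  by rewrite -E1 -E2.
move=> z zu; exists (v, z.2); first by rewrite in_id_list.
by rewrite RE // in_id_list.
Qed.

Lemma id_edge_perfect R p : p.1 != p.2 ->
  (forall x y, x \in id_list p.1 -> y \in id_list p.2 -> R x y = (x.2 == y.2)) ->
  (forall x y, x \in id_list p.2 -> y \in id_list p.1 -> R x y = (x.2 == y.2)) ->
  matching_edge id_list R p /\ perfect_edge id_list R p.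
Proof.
move=> pn R12 R21; rewrite eq_sym in pn.
have [o21 e21] := color_matching pn R21; rewrite eq_sym in pn.
have [o12 e12] := color_matching pn R12.
by split; [split | split].
Qed.

Lemma id_full p : p \in edges e ->
  matching_edge id_list id_adj p /\ perfect_edge id_list id_adj p.
Proof.
move=> pE; have pn := edges_loopless eirr pE.
move: pE; rewrite inE => /andP[ep _].
apply: id_edge_perfect => // x y xu yv; first by rewrite (id_adjE xu yv pn) ep.
by rewrite (id_adjE xu yv) 1?eq_sym // esym ep.
Qed.

Lemma id_cover : is_mfold_cover e m id_adj id_list.
Proof.
split; first exact: id_adj_sym.
split; first by move=> x; rewrite /id_adj !eqxx eirr.
split; first by move=> x; exists x.1; rewrite in_id_list.
split.
  move=> u v uv; rewrite -setI_eq0; apply/eqP/setP => x; rewrite !inE.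
  by apply/negP => /andP[/eqP -> /eqP E]; rewrite E eqxx in uv.
split.
  move=> u x y; rewrite !in_id_list => /eqP xu /eqP yu xy.
  rewrite /id_adj xu yu eqxx eirr orbF /=.
  by apply: contra xy => /eqP E; apply/eqP/pair_eq; rewrite ?xu ?yu.
split.
  move=> u v x y; rewrite !in_id_list => /eqP xu /eqP yv; rewrite /id_adj xu yv.
  by case/orP => [/andP[/eqP -> _]|/andP[-> _]]; [left|right].
split; last exact: id_list_card.
move=> u v euv; have uv : u != v by apply: contraTneq euv => ->; rewrite eirr.
have vu : v != u by rewrite eq_sym.
have R_uv x y : x \in id_list u -> y \in id_list v -> id_adj x y = (x.2 == y.2).
  by move=> xu yv; rewrite (id_adjE xu yv uv) euv.
have R_vu x y : x \in id_list v -> y \in id_list u -> id_adj x y = (x.2 == y.2).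
  by move=> xv yu; rewrite (id_adjE xv yu vu) esym euv.
have [once_uv _] := color_matching uv R_uv.
have [once_vu _] := color_matching vu R_vu.
split=> // x x' y xu x'u yv hxy hx'y.
by apply: (once_vu y); rewrite // id_adj_sym.
Qed.

Lemma id_count_free : count_free e id_list id_adj = chrom e m.
Proof.
rewrite /count_free /chrom.
pose lift (col : {ffun V -> 'I_m}) : {ffun V -> V * 'I_m} := [ffun u => (u, col u)].
have lift_inj : injective lift.
  move=> c c' E; apply/ffunP => u; have := congr1 (fun f : {ffun V -> V * 'I_m} => f u) E.
  by rewrite !ffunE => -[].
rewrite -(card_imset _ lift_inj); apply: eq_card => f; rewrite inE.
apply/andP/imsetP.
- case=> fC B0; have fL w : f w \in id_list w by move: fC; rewrite in_transversals => /forallP.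
  exists [ffun u => (f u).2].
    rewrite inE; apply/forallP => u; apply/forallP => v; apply/implyP => euv.
    have uv : u != v by apply: contraTneq euv => ->; rewrite eirr.
    have := conflict_free_indep esym eirr id_cover u v fC B0.
    by rewrite (id_adjE (fL u) (fL v) uv) euv !ffunE.
  apply/ffunP => u; rewrite !ffunE; move: (fL u); rewrite in_id_list.
  by case: (f u) => a b /= /eqP ->.
- case=> col; rewrite inE => /forallP pc ->; split.
    by rewrite in_transversals; apply/forallP => u; rewrite ffunE in_id_list.
  apply/eqP/setP => p; rewrite !inE; apply/negP => /andP[/andP[ep _]].
  have pn : p.1 != p.2 by apply: contraTneq ep => ->; rewrite eirr.
  have y1 : (p.1, col p.1) \in id_list p.1 by rewrite in_id_list.
  have y2 : (p.2, col p.2) \in id_list p.2 by rewrite in_id_list.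
  rewrite !ffunE (id_adjE y1 y2 pn) ep /=.
  by have := pc p.1 => /forallP/(_ p.2); rewrite ep /= => /negbTE ->.
Qed.

Lemma monochromatic_joined (A : {set V * V}) t0 : A \subset edges e ->
  joined_maps id_list same_color (star t0 (covered A :\ t0))
  \subset joined_maps id_list id_adj A.
Proof.
move=> sA; apply/subsetP => f; rewrite !in_joined_maps => /andP[fC /forall_inP fR].
rewrite fC /=; apply/forall_inP => p pA.
have fL w : f w \in id_list w by move: fC; rewrite in_transversals => /forallP.
have col t : t \in covered A -> (f t).2 = (f t0).2.
  case: (eqVneq t t0) => [->//|tt0] tT.
  have : (t0, t) \in star t0 (covered A :\ t0) by apply/imsetP; exists t; rewrite // in_setD1 tt0.
  by move/fR => /= /eqP.
have pE := subsetP sA _ pA; have pn := edges_loopless eirr pE.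
move: pE; rewrite inE => /andP[ep _].
rewrite (id_adjE (fL p.1) (fL p.2) pn) ep /= !col //.
all: by apply: (covered_incident pA); rewrite /incident eqxx ?orbT.
Qed.

Lemma id_count_joined_lower (A : {set V * V}) k : A \subset edges e ->
  #|covered A| <= k.+1 -> m ^ #|V| <= count_joined id_list id_adj A * m ^ k.
Proof.
move=> sA tA; case: (set_0Vmem (covered A)) => [T0 | [t0 t0T]].
  have -> : A = set0.
    apply/setP => p; rewrite inE; apply/negP => pA.
    have : p.1 \in covered A by apply: (covered_incident pA); rewrite /incident eqxx.
    by rewrite T0 inE.
  by rewrite (count_joined0 id_list_card) leq_pmulr // expn_gt0 m_gt0.
set S := covered A :\ t0.
have nS : t0 \notin S by rewrite !inE eqxx.
have star_full q : q \in star t0 S ->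
    matching_edge id_list same_color q /\ perfect_edge id_list same_color q.
  move=> /imsetP[t tS ->]; apply: id_edge_perfect => //=.
  by apply: contraNneq nS => ->.
have E := peelable_count_eq id_list_card m_gt0 (fun x y => eq_sym x.2 y.2)
  (star_peelable nS) star_full.
rewrite -E; apply: leq_mul.
  exact: subset_leq_card (monochromatic_joined t0 sA).
rewrite leq_pexp2l // star_card.
by move: tA; rewrite (cardsD1 t0) t0T add1n ltnS.
Qed.

End IdentityCover.

(* For every edge ab of G, the elements of L a and of
   L b left unmatched by H are equally many (both lists have size m and the
   matched parts correspond bijectively); pairing them off in enumeration
   order extends H to a relation under which every edge of G is a perfect
   matching. *)
Section Completion.
Variables (V : finType) (e : rel V).
Hypothesis esym : symmetric e.
Hypothesis eirr : irreflexive e.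
Variables (HT : finType) (h : rel HT) (L : V -> {set HT}) (m : nat).
Hypothesis cov : is_mfold_cover e m h L.

Definition reach (b : V) := [set x | [exists y in L b, h x y]].
Definition matched a b := L a :&: reach b.
Definition unmatched a b := L a :\: reach b.

Definition paired a b x y := [&& x \in unmatched a b, y \in unmatched b a &
  index x (enum (unmatched a b)) == index y (enum (unmatched b a))].

Definition completion : rel HT :=
  fun x y => h x y || [exists a, exists b, e a b && paired a b x y].

Lemma completion_sym : symmetric completion.
Proof.
move=> x y; rewrite /completion (cover_sym cov); congr (_ || _).
apply/existsP/existsP => -[a /existsP[b /andP[eab E]]]; exists b; apply/existsP; exists a.
all: rewrite esym eab /=; move: E; rewrite /paired => /and3P[-> -> /eqP ->]; by rewrite eqxx.
Qed.

Lemma cover_matching a b : e a b -> joins_at_most_once L h a b /\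
  forall x x' y, x \in L a -> x' \in L a -> y \in L b -> h x y -> h x' y -> x = x'.
Proof. by case: cov => _ [_ [_ [_ [_ [_ [mat _]]]]]] eab; case: (mat a b eab). Qed.

(* Matched elements of L a have distinct partners in L b. *)
Lemma matched_le a b : e a b -> #|matched a b| <= #|matched b a|.
Proof.
move=> eab; have [_ inj] := cover_matching eab.
pose partner x := odflt x [pick y in L b | h x y].
have partnerP x : x \in matched a b -> (partner x \in L b) && h x (partner x).
  rewrite !inE => /andP[_ /exists_inP[y yb hxy]]; rewrite /partner.
  by case: pickP => [z /andP[-> ->]|/(_ y)] //=; rewrite yb hxy.
rewrite -(@card_in_imset _ _ partner); last first.
  move=> x x' xM x'M E; have := partnerP _ xM; have := partnerP _ x'M; rewrite -E.
  move=> /andP[yb h1] /andP[_ h2]; move: xM x'M; rewrite !inE => /andP[xa _] /andP[x'a _].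
  exact: (inj _ _ _ xa x'a yb h2 h1).
apply/subset_leq_card/subsetP => _ /imsetP[x xM ->].
have /andP[yb hxy] := partnerP _ xM; move: xM; rewrite !inE => /andP[xa _].
by rewrite yb /=; apply/exists_inP; exists x; rewrite // (cover_sym cov).
Qed.

Lemma unmatched_card a b : e a b -> #|unmatched a b| = #|unmatched b a|.
Proof.
move=> eab.
have E1 := cardsID (reach b) (L a); have E2 := cardsID (reach a) (L b).
have M : #|matched a b| = #|matched b a|.
  by apply/eqP; rewrite eqn_leq !matched_le // esym.
move: E1 E2; rewrite !(cover_card cov) /unmatched; rewrite /matched in M; lia.
Qed.

Lemma paired_ends a b a' b' x y : x \in L a -> y \in L b -> paired a' b' x y ->
  a' = a /\ b' = b.
Proof.
move=> xa yb /and3P[]; rewrite !inE => /andP[_ xa'] /andP[_ yb'] _.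
by split; [apply: (cover_list_unique cov xa' xa) | apply: (cover_list_unique cov yb' yb)].
Qed.

Lemma paired_no_h a b x y y' : y' \in L b -> paired a b x y -> ~~ h x y'.
Proof.
move=> y'b /and3P[]; rewrite !inE => /andP[/exists_inP nz _] _ _.
by apply/negP => hxy; apply: nz; exists y'.
Qed.

Lemma completion_once a b : e a b -> joins_at_most_once L completion a b.
Proof.
move=> eab z y y' za yb y'b.
rewrite /completion => /orP[hy|/existsP[a1 /existsP[b1 /andP[_ E1]]]]
  /orP[hy'|/existsP[a2 /existsP[b2 /andP[_ E2]]]].
- exact: ((cover_matching eab).1 z y y' za yb y'b hy hy').
- case: (paired_ends za y'b E2) => ? ?; subst.
  by rewrite (negbTE (paired_no_h yb E2)) in hy.
- case: (paired_ends za yb E1) => ? ?; subst.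
  by rewrite (negbTE (paired_no_h y'b E1)) in hy'.
- case: (paired_ends za yb E1) => ? ?; case: (paired_ends za y'b E2) => ? ?; subst.
  case/and3P: E1 => _ yU /eqP i1; case/and3P: E2 => _ y'U /eqP i2.
  rewrite -(nth_index y (_ : y \in enum (unmatched b a))) ?mem_enum //.
  by rewrite -(nth_index y (_ : y' \in enum (unmatched b a))) ?mem_enum // -i1 -i2.
Qed.

Lemma completion_each a b : e a b -> joins_each L completion a b.
Proof.
move=> eab z za.
case: (boolP [exists y in L b, h z y]) => [/exists_inP[y yb hzy]|nz].
  by exists y; rewrite // /completion hzy.
have zU : z \in unmatched a b by rewrite !inE nz za.
set i := index z (enum (unmatched a b)).
have ilt : i < size (enum (unmatched b a)).
  by rewrite -cardE -(unmatched_card eab) cardE index_mem mem_enum.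
set y := nth z (enum (unmatched b a)) i.
have yU : y \in unmatched b a by rewrite -mem_enum mem_nth.
exists y; first by move: yU; rewrite !inE => /andP[].
apply/orP; right; apply/existsP; exists a; apply/existsP; exists b.
by rewrite eab /paired zU yU /= index_uniq ?enum_uniq // eqxx.
Qed.

Lemma completion_full p : p \in edges e ->
  matching_edge L completion p /\ perfect_edge L completion p.
Proof.
move=> pE; have pn := edges_loopless eirr pE.
move: pE; rewrite inE => /andP[ep _]; have ep' : e p.2 p.1 by rewrite esym.
by split; [split | split]; rewrite ?pn //; [exact: completion_once | exact: completion_once
  | exact: completion_each | exact: completion_each].
Qed.

(* A conflict for H is a conflict for its completion. *)
Lemma completion_count_free : count_free e L completion <= count_free e L h.
Proof.
apply/subset_leq_card/subsetP => f; rewrite !inE => /andP[-> /eqP B0] /=.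
apply/eqP/setP => p; rewrite !inE; apply/negP => /andP[pE hp].
have : p \in conflicts e completion f by rewrite !inE pE /completion hp.
by rewrite B0 inE.
Qed.

End Completion.

Import Order.TTheory GRing.Theory Num.Theory.

Section AlternatingSums.
Local Open Scope ring_scope.

Lemma alternating_binomial_sum k b :
  \sum_(j < k.+1) (-1) ^+ j * ('C(b, j))%:Z =
  if b == 0%N then 1 else (-1) ^+ k * ('C(b.-1, k))%:Z.
Proof.
case: b => [|b] /=.
  rewrite big_ord_recl /= expr0 mul1r bin0 big1 ?addr0 // => j _.
  by rewrite bin0n /= mulr0.
elim: k => [|k IH]; first by rewrite big_ord1 expr0 !mul1r !bin0.
rewrite big_ord_recr /= IH binS PoszD mulrDr exprS mulN1r.
by rewrite !mulNr addrCA subrr addr0.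
Qed.

Lemma Posz_sum (I : finType) (P : pred I) (F : I -> nat) :
  (\sum_(i | P i) F i)%N%:Z = \sum_(i | P i) (F i)%:Z.
Proof. by rewrite -natz natr_sum; apply: eq_bigr => i _; rewrite natz. Qed.

Lemma signed_subsets_sum (T : finType) (B : {set T}) k :
  \sum_(A : {set T} | (A \subset B) && (#|A| <= k)%N) (-1) ^+ #|A| =
  \sum_(j < k.+1) (-1) ^+ j * ('C(#|B|, j))%:Z :> int.
Proof.
rewrite (partition_big (fun A : {set T} => (inord #|A| : 'I_k.+1)) xpredT) //=.
apply: eq_bigr => j _; rewrite -cards_draws.
rewrite (eq_bigl (fun A : {set T} => A \in [set A : {set T} | A \subset B & #|A| == j]));
  last first.
  move=> A; rewrite inE; apply/andP/andP => [[/andP[-> le] /eqP E]|[-> /eqP E]].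
    by split => //; rewrite -E inordK.
  split; last by apply/eqP/val_inj; rewrite /= inordK E // ltn_ord.
  by rewrite E -ltnS ltn_ord.
rewrite (eq_bigr (fun _ => (-1) ^+ j)); last by move=> A; rewrite inE => /andP[_ /eqP ->].
by rewrite sumr_const -mulr_natr natz.
Qed.

End AlternatingSums.

Section Bonferroni.
Variables (T X : finType) (U : {set T}) (D : {set X}) (bad : X -> {set T}).
Hypothesis bad_sub : forall x, bad x \subset U.
Local Open Scope ring_scope.

Definition hits (A : {set T}) := #|[set x in D | A \subset bad x]|.

Definition avoiders := #|[set x in D | bad x == set0]|.

Definition layer j := (\sum_(A in powerset U | #|A| == j) hits A)%N.

Definition bonferroni k : int :=
  \sum_(A in powerset U | (#|A| <= k)%N) (-1) ^+ #|A| * (hits A)%:Z.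

Lemma bonferroniS k :
  bonferroni k.+1 = bonferroni k + (-1) ^+ k.+1 * (layer k.+1)%:Z.
Proof.
rewrite /bonferroni (bigID (fun A : {set T} => #|A| == k.+1)) /= addrC.
congr (_ + _).
  apply: eq_bigl => A; rewrite -andbA; case: (A \in _) => //=.
  by rewrite andbC -ltn_neqAle ltnS.
rewrite /layer Posz_sum big_distrr /=; apply: congr_big => // A.
  by rewrite -andbA; case: (A \in _) => //=; case: eqP => [->|]; rewrite ?leqnn ?andbF.
by move=> /andP[_ /eqP ->].
Qed.

Lemma hitsE A : hits A = (\sum_(x in D) (A \subset bad x))%N.
Proof.
rewrite /hits -sum1_card big_mkcond [RHS]big_mkcond /=.
by apply: eq_bigr => x _; rewrite inE; case: (x \in D); case: (A \subset bad x).
Qed.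

Lemma bonferroniE k : bonferroni k =
  \sum_(x in D) \sum_(j < k.+1) (-1) ^+ j * ('C(#|bad x|, j))%:Z.
Proof.
rewrite /bonferroni.
rewrite (eq_bigr (fun A : {set T} =>
    \sum_(x in D) (-1) ^+ #|A| * ((A \subset bad x) : nat)%:Z)); last first.
  by move=> A _; rewrite hitsE Posz_sum big_distrr.
rewrite exchange_big /=; apply: eq_bigr => x xD; rewrite -signed_subsets_sum.
rewrite [LHS]big_mkcond [RHS]big_mkcond /=; apply: eq_bigr => A _.
rewrite inE; case: (boolP (A \subset bad x)) => sA /=.
  by rewrite (subset_trans sA (bad_sub x)) /=; case: (#|A| <= k)%N; rewrite ?mulr1.
by case: (_ && _); rewrite ?mulr0.
Qed.

Lemma avoidersE : avoiders%:Z = \sum_(x in D) (#|bad x| == 0%N)%:Z.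
Proof.
rewrite /avoiders -sum1_card Posz_sum big_mkcond [RHS]big_mkcond /=.
by apply: eq_bigr => x _; rewrite inE cards_eq0; case: (_ \in _); case: (_ == _).
Qed.

Lemma bonferroni_odd k : odd k -> bonferroni k <= avoiders%:Z.
Proof.
move=> ok; rewrite bonferroniE avoidersE; apply: ler_sum => x _.
rewrite alternating_binomial_sum; case: eqP => // _.
by rewrite -signr_odd ok expr1 mulN1r oppr_le0.
Qed.

Lemma bonferroni_even k : ~~ odd k -> avoiders%:Z <= bonferroni k.
Proof.
move=> ek; rewrite bonferroniE avoidersE; apply: ler_sum => x _.
rewrite alternating_binomial_sum; case: eqP => // _.
by rewrite -signr_odd (negbTE ek) expr0 mul1r.
Qed.

End Bonferroni.

Section GirthCounts.
Variables (V : finType) (e : rel V).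
Hypothesis esym : symmetric e.
Hypothesis eirr : irreflexive e.
Variable g : nat.
Hypothesis girth_ge : forall c, is_cycle e c -> g <= size c.
Variables (HT : finType) (L : V -> {set HT}) (R : rel HT) (m : nat).
Hypothesis card_L : forall u, #|L u| = m.
Hypothesis m_gt0 : 0 < m.
Hypothesis R_sym : symmetric R.

Lemma count_joined_small (A : {set V * V}) : A \subset edges e -> #|A| < g ->
  (forall p, p \in edges e -> matching_edge L R p /\ perfect_edge L R p) ->
  count_joined L R A * m ^ #|A| = m ^ #|V|.
Proof.
move=> sA ltA R_full.
apply: (peelable_count_eq card_L m_gt0 R_sym (peelable_small esym eirr girth_ge sA ltA)).
by move=> p pA; apply: R_full; exact: (subsetP sA).
Qed.

(* A set of g edges that is not a forest still loses a factor m ^ (g - 1):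
   deleting any edge leaves a forest. *)
Lemma count_joined_cycle (A : {set V * V}) : 2 < g -> A \subset edges e -> #|A| = g ->
  (forall p, p \in edges e -> matching_edge L R p) ->
  count_joined L R A * m ^ g.-1 <= m ^ #|V|.
Proof.
move=> g3 sA cA R_match.
have : 0 < #|A| by rewrite cA ltnW // ltnW.
rewrite card_gt0 => /set0Pn[p pA].
have sA' : A :\ p \subset edges e by apply: subset_trans sA; exact: subsetDl.
have cA' : #|A :\ p| = g.-1 by move: cA; rewrite (cardsD1 p) pA add1n => <-.
have rA' : peelable (A :\ p).
  by apply: (peelable_small esym eirr girth_ge sA'); rewrite cA' prednK // ltnW // ltnW.
have := peelable_count_le card_L m_gt0 R_sym rA' (fun q qA => R_match q (subsetP sA' q qA)).
apply: leq_trans; rewrite cA' leq_mul2r.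
by rewrite (count_joined_sub L R (subsetDl A [set p])) orbT.
Qed.

(* A set of g + 1 edges becomes a forest after deleting one edge. *)
Lemma count_joined_girth_succ (A : {set V * V}) : 0 < g -> A \subset edges e ->
  #|A| = g.+1 -> (forall p, p \in edges e -> matching_edge L R p) ->
  count_joined L R A * m ^ g <= m ^ #|V|.
Proof.
move=> g0 sA cA R_match.
have [p pA rA'] := peelable_remove_one esym eirr girth_ge g0 sA cA.
have sA' : A :\ p \subset edges e by apply: subset_trans sA; exact: subsetDl.
have cA' : #|A :\ p| = g by move: cA; rewrite (cardsD1 p) pA add1n => -[].
have := peelable_count_le card_L m_gt0 R_sym rA' (fun q qA => R_match q (subsetP sA' q qA)).
apply: leq_trans; rewrite cA' leq_mul2r.
by rewrite (count_joined_sub L R (subsetDl A [set p])) orbT.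
Qed.

End GirthCounts.

Section ConflictBonferroni.
Variables (V : finType) (e : rel V) (HT : finType) (L : V -> {set HT}) (R : rel HT).

Definition conflict_bonferroni := bonferroni (edges e) (transversals L) (conflicts e R).
Definition conflict_layer := layer (edges e) (transversals L) (conflicts e R).

Lemma conflicts_sub f : conflicts e R f \subset edges e.
Proof. by apply/subsetP => p; rewrite inE => /andP[]. Qed.

Lemma hits_conflicts (A : {set V * V}) : A \subset edges e ->
  hits (transversals L) (conflicts e R) A = count_joined L R A.
Proof.
move=> sA; rewrite /hits /count_joined; apply: eq_card => f.
rewrite !inE in_joined_maps; case: (f \in transversals L) => //=.
apply/subsetP/forall_inP => h p pA; first by have := h p pA; rewrite inE => /andP[].
by rewrite inE (subsetP sA _ pA) h.
Qed.

Lemma conflict_bonferroni_even k : ~~ odd k ->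
  ((count_free e L R)%:Z <= conflict_bonferroni k)%R.
Proof. exact: (@bonferroni_even _ _ _ (transversals L) _ conflicts_sub). Qed.

Lemma conflict_bonferroni_odd k : odd k ->
  (conflict_bonferroni k <= (count_free e L R)%:Z)%R.
Proof. exact: (@bonferroni_odd _ _ _ (transversals L) _ conflicts_sub). Qed.

End ConflictBonferroni.

(* Edge
   sets of size < g are forests and are joined equally often by both, so
   the inclusion-exclusion sums agree up to order g - 1; at order g the
   identity cover is joined more often (only cycles differ).  Truncating
   at g + 1 (above) and at g (below) leaves as only error the layer g + 1
   of the identity cover, which is O(m ^ (|V| - g)). *)
Section Comparison.
Variables (V : finType) (e : rel V).
Hypothesis esym : symmetric e.
Hypothesis eirr : irreflexive e.
Variable g : nat.
Hypothesis g_odd : odd g.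
Hypothesis g_gt2 : 2 < g.
Hypothesis girth_ge : forall c, is_cycle e c -> g <= size c.
Variable m : nat.
Hypothesis m_gt0 : 0 < m.
Variables (HT : finType) (L : V -> {set HT}) (R : rel HT).
Hypothesis card_L : forall u, #|L u| = m.
Hypothesis R_sym : symmetric R.
Hypothesis R_full : forall p, p \in edges e -> matching_edge L R p /\ perfect_edge L R p.

Let Lid := @id_list V m.
Let hid := @id_adj V e m.
Let id_sym : symmetric hid := id_adj_sym esym (m := m).
Let id_card : forall u, #|Lid u| = m := @id_list_card V m.
Let id_full' := @id_full V e esym eirr m.

Let mpow_gt0 n : 0 < m ^ n. Proof. by rewrite expn_gt0 m_gt0. Qed.

Lemma count_joined_agree (A : {set V * V}) : A \subset edges e -> #|A| < g ->
  count_joined Lid hid A = count_joined L R A.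
Proof.
move=> sA ltA; apply/eqP; rewrite -(eqn_pmul2r (mpow_gt0 #|A|)).
rewrite (count_joined_small esym eirr girth_ge id_card m_gt0 id_sym sA ltA id_full').
by rewrite (count_joined_small esym eirr girth_ge card_L m_gt0 R_sym sA ltA R_full).
Qed.

(* At the girth the identity cover joins more: a forest is joined equally
   often, a g-cycle at least m ^ (|V| - g + 1) times by the identity cover
   and at most that often by R. *)
Lemma count_joined_girth (A : {set V * V}) : A \subset edges e -> #|A| = g ->
  count_joined L R A <= count_joined Lid hid A.
Proof.
move=> sA cA; case: (pselect (peelable A)) => rA.
  rewrite -(leq_pmul2r (mpow_gt0 #|A|)).
  rewrite (peelable_count_eq card_L m_gt0 R_sym rA (fun p pA => R_full (subsetP sA p pA))).
  by rewrite (peelable_count_eq id_card m_gt0 id_sym rA (fun p pA => id_full' (subsetP sA p pA))).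
have [_ _ covA] := nonpeelable_girth esym eirr girth_ge sA cA rA.
rewrite -(leq_pmul2r (mpow_gt0 g.-1)).
apply: (leq_trans (count_joined_cycle esym eirr girth_ge card_L m_gt0 R_sym g_gt2 sA cA
  (fun p pE => (R_full pE).1))).
by apply: id_count_joined_lower; rewrite // prednK // ltnW // ltnW.
Qed.

Lemma count_free_gap :
  count_free e Lid hid <= count_free e L R + conflict_layer e Lid hid g.+1.
Proof.
have [g' Eg] : exists g', g = g'.+1 by exists g.-1; rewrite prednK // ltnW // ltnW.
have up := conflict_bonferroni_even e Lid hid (k := g.+1); rewrite /= g_odd in up.
have low := conflict_bonferroni_odd e L R g_odd.
rewrite /conflict_bonferroni Eg !bonferroniS in up low; have {}up := up isT.
have same : conflict_bonferroni e Lid hid g' = conflict_bonferroni e L R g'.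
  rewrite /conflict_bonferroni; apply: eq_bigr => A; rewrite inE => /andP[sA lA].
  by rewrite hits_conflicts ?hits_conflicts // count_joined_agree // Eg ltnS.
have layer_g : conflict_layer e L R g'.+1 <= conflict_layer e Lid hid g'.+1.
  apply: leq_sum => A; rewrite inE => /andP[sA /eqP cA].
  by rewrite !hits_conflicts // count_joined_girth // Eg.
have odd_g' : odd g'.+1 by rewrite -Eg.
have sg_even : ((-1) ^+ g'.+2 = 1 :> int)%R by rewrite -signr_odd oddS odd_g'.
have sg_odd : ((-1) ^+ g'.+1 = -1 :> int)%R by rewrite -signr_odd odd_g' expr1.
rewrite /conflict_bonferroni in same.
rewrite sg_even sg_odd mul1r mulN1r same in up; rewrite sg_odd mulN1r in low.
rewrite Eg -lez_nat PoszD; apply: (le_trans up); rewrite lerD2r.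
by apply: le_trans low; rewrite lerD2l lerN2 lez_nat.
Qed.

Lemma conflict_layer_bound : conflict_layer e Lid hid g.+1 * m ^ g <=
  #|[set A in powerset (edges e) | #|A| == g.+1]| * m ^ #|V|.
Proof.
rewrite /conflict_layer /layer big_distrl /=.
rewrite (eq_bigl (mem [set A in powerset (edges e) | #|A| == g.+1])); last first.
  by move=> A; rewrite !inE.
rewrite -sum_nat_const; apply: leq_sum => A; rewrite !inE => /andP[sA /eqP cA].
rewrite hits_conflicts //.
apply: (count_joined_girth_succ esym eirr girth_ge id_card m_gt0 id_sym _ sA cA).
  by rewrite ltnW // ltnW.
by move=> p pE; case: (id_full' pE).
Qed.

End Comparison.

Section DPColorFunction.
Variables (V : finType) (e : rel V).
Hypothesis esym : symmetric e.
Hypothesis eirr : irreflexive e.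

(* P_DP(G, m) is attained by some m-fold cover and is at most P(G, m),
   the identity cover having exactly P(G, m) colorings. *)
Lemma P_DP_attained m : 0 < m ->
  (exists (HT : finType) (h : rel HT) (L : V -> {set HT}),
     is_mfold_cover e m h L /\ num_cover_colorings V h = P_DP e m) /\
  P_DP e m <= chrom e m.
Proof.
move=> m_gt0.
have ach : dp_achievable e m (chrom e m).
  exists ((V * 'I_m)%type : finType), (@id_adj V e m), (@id_list V m); split.
    exact: id_cover.
  by rewrite (cover_colorings_count esym eirr (id_cover esym eirr m)) id_count_free.
rewrite /P_DP; case: pselect => [pf|npf]; last first.
  by exfalso; apply: npf; exists (chrom e m); apply/asboolP.
case: ex_minnP => k /asboolP [HT [h [L [cv E]]]] mink; split; first by exists HT, h, L.
by apply: mink; apply/asboolP.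
Qed.

Lemma chrom_DP_gap g : odd g -> 2 < g -> (forall c, is_cycle e c -> g <= size c) ->
  exists C M0 : nat, forall m : nat, M0 <= m ->
    absdiff (chrom e m) (P_DP e m) * m ^ g <= C * m ^ #|V|.
Proof.
move=> g_odd g_gt2 girth_ge.
exists #|[set A in powerset (edges e) | #|A| == g.+1]|, 1 => m m_gt0.
have [[HT [h [L [cov E]]]] le_chrom] := P_DP_attained m_gt0.
have -> : absdiff (chrom e m) (P_DP e m) = chrom e m - P_DP e m.
  by rewrite /absdiff (eqP (_ : P_DP e m - chrom e m == 0)) ?addn0 // subn_eq0.
have gap := count_free_gap esym eirr g_odd g_gt2 girth_ge m_gt0 (cover_card cov)
  (completion_sym esym cov) (completion_full esym eirr cov).
have DP_ge := completion_count_free e h L.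
rewrite id_count_free // in gap; rewrite -(cover_colorings_count esym eirr cov) E in DP_ge.
apply: leq_trans (conflict_layer_bound esym eirr g_gt2 girth_ge m_gt0).
rewrite leq_mul2r leq_subLR; apply/orP; right.
by apply: leq_trans gap _; rewrite leq_add2r.
Qed.

End DPColorFunction.

Theorem theorem4 :
  (forall (V : finType) (e : rel V) (g : nat),
      symmetric e -> irreflexive e -> 3 <= g -> odd g ->
      (girth_is e g \/ girth_is e g.+1) ->
      exists C M0 : nat, forall m : nat, M0 <= m ->
        absdiff (chrom e m) (P_DP e m) * m ^ g <= C * m ^ #|V|)
  /\
  (forall (V : finType) (e : rel V),
      symmetric e -> irreflexive e ->
      exists C M0 : nat, forall m : nat, M0 <= m ->
        absdiff (chrom e m) (P_DP e m) * m ^ 3 <= C * m ^ #|V|).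
Proof.
split.
- (* girth g or g + 1: in both cases every cycle has length >= g *)
  move=> V e g esym eirr g_ge3 g_odd girth; apply: (chrom_DP_gap esym eirr g_odd g_ge3).
  by case: girth => [[_ H]|[_ H]] c /H; last exact: ltnW.
- (* every graph has girth >= 3 *)
  move=> V e esym eirr; apply: (chrom_DP_gap esym eirr (g := 3)) => // c [] //.
Qed.
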